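(* Let $n$ be one of the integers for which $\mathbb{Z}[\xi_n]$ has class number one, $\mathcal{M}_n=\mathbb{Z}[\xi_n]$, and $I$ a principal ideal of $\mathcal{M}_n$ of index $\ell$. With respect to the basis $\{1,\xi_n,\dots,\xi_n^{\varphi(n)-1}\}$, let $S$ be the $\varphi(n)\times\varphi(n)$ matrix whose columns generate the sublattice $L$ representing $I$, let $A$ and $B$ be the matrices representing $\phi_1$ and $\phi_2$ respectively, and let $x_1+L,\dots,x_\ell+L$ be the cosets of $L$ in $\Lambda$ (with $x_i$ integer coordinate vectors). For the Bravais coloring of $\mathcal{M}_n$ determined by $I$, with color symmetry group $H$ and color fixing group $K$: (i) $\phi_2\in K$ if and only if $\phi_2\in H$ and $S^{-1}(Bx_i-x_i)$ is an integral vector for all $i=1,\dots,\ell$; (ii) for $k$ dividing $N$, $\phi_1^k\in K$ if and only if $S^{-1}(A^kx_i-x_i)$ is an integral vector for all $i=1,\dots,\ell$.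
   Context: Standing assumption: $n\in\{3,4,5,7,8,9,11,12,13,15,16,17,19,20,21,24,25,27,28,32,33,35,36,40,44,45,48,60,84\}$ (the values for which $\mathcal{M}_n=\mathbb{Z}[\xi_n]$, $\xi_n=\exp(2\pi i/n)$, is a principal ideal domain). Let $\varphi$ be Euler's function and $N=n$ if $n$ is even, $N=2n$ if $n$ is odd. Using the $\mathbb{Z}$-basis $\{1,\xi_n,\dots,\xi_n^{\varphi(n)-1}\}$ of $\mathcal{M}_n$, each element is identified with its integer coordinate vector, so $\mathcal{M}_n$ becomes a lattice $\Lambda=\mathbb{Z}^{\varphi(n)}\subset\mathbb{R}^{\varphi(n)}$, and a principal ideal $I$ of index $\ell$ becomes a sublattice $L\subseteq\Lambda$ of index $\ell$. Let $\phi_1$ be the linear map induced by multiplication by $\exp(2\pi i/N)$ (an $N$-fold rotation) and $\phi_2$ the linear map induced by complex conjugation (a reflection); they generate a dihedral group $D_N$ of order $2N$. Let $T(G)=\{t_y: x\mapsto x+y \mid y\in\Lambda\}$; the symmetry group of $\Lambda$ is $G=T(G)\rtimes D_N$. The Bravais coloring determined by $I$ assigns to each element of $\Lambda$ one of $\ell$ colors, two elements getting the same color iff they lie in the same coset of $L$ in $\Lambda$. The color symmetry group $H$ is the set of $g\in G$ such that for every coset $x+L$ the image $g(x+L)$ is again a coset of $L$; the color fixing group $K$ is the set of $g\in H$ with $g(x+L)=x+L$ for all $x\in\Lambda$. *)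

From mathcomp Require Import all_boot all_algebra.
From mathcomp Require Import reals trigo.
From mathcomp Require Import complex.
Set Implicit Arguments.
Unset Strict Implicit.
Import GRing.Theory Num.Theory.
Local Open Scope ring_scope.
Local Open Scope complex_scope.

Definition class_number_one_n : seq nat :=
  [:: 3; 4; 5; 7; 8; 9; 11; 12; 13; 15; 16; 17; 19; 20; 21; 24; 25; 27; 28;
      32; 33; 35; 36; 40; 44; 45; 48; 60; 84]%N.

Definition NN (n : nat) : nat := if odd n then (2 * n)%N else n.

Definition rootU (R : realType) (m : nat) : R[i] :=
  cos (2 * pi / m%:R) +i* sin (2 * pi / m%:R).

(* The lattice Lambda = Z^phi(n): integer coordinate (column) vectors
   with respect to the basis 1, xi_n, ..., xi_n^(phi(n)-1). *)
Notation lat n := 'cV[int]_(totient n).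
Notation latmx n := 'M[int]_(totient n).

Definition emb (R : realType) (n : nat) (v : lat n) : R[i] :=
  \sum_(j < totient n) (v j 0)%:~R * rootU R n ^+ j.

(* The sublattice L representing the principal ideal I = alpha M_n,
   where alpha has coordinate vector a. *)
Definition inL (R : realType) (n : nat) (a : lat n) (v : lat n) : Prop :=
  exists w : lat n, emb R v = emb R a * emb R w.

(* Elements of the symmetry group G = T(G) x| D_N, D_N = <phi_1, phi_2>,
   with phi_1, phi_2 given by the integer matrices A, B:
   the maps x |-> A^a B^b x + y. *)
Definition inG (n : nat) (A B : latmx n) (g : lat n -> lat n) : Prop :=
  exists (a b : nat) (y : lat n), forall x, g x = A ^+ a *m (B ^+ b *m x) + y.

(* g(x + L) = y + L as sets, for the sublattice (given as a predicate) L. *)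
Definition maps_coset (n : nat) (L : lat n -> Prop) (g : lat n -> lat n)
  (x y : lat n) : Prop :=
  forall w, L (w - y) <-> exists z, L (z - x) /\ g z = w.

Definition inH (n : nat) (A B : latmx n) (L : lat n -> Prop)
  (g : lat n -> lat n) : Prop :=
  inG A B g /\ forall x, exists y, maps_coset L g x y.

Definition inK (n : nat) (A B : latmx n) (L : lat n -> Prop)
  (g : lat n -> lat n) : Prop :=
  inH A B L g /\ forall x, maps_coset L g x x.

Definition ratmx (m p : nat) (M : 'M[int]_(m, p)) : 'M[rat]_(m, p) :=
  map_mx (fun z : int => z%:~R) M.

Definition integral_vec (m : nat) (v : 'cV[rat]_m) : Prop :=
  forall i, v i 0 \is a Num.int.

From mathcomp Require Import all_boot all_algebra.
From mathcomp Require Import reals trigo.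
From mathcomp Require Import complex.
From mathcomp Require Import order algC cyclotomic.
Import Order.TTheory GRing.Theory Num.Theory.
Local Open Scope ring_scope.
Local Open Scope complex_scope.

(* Because [L] has finite index, [S] is invertible over Q and [S^-1 y] is
   integral exactly when [y] lies in [L]; so both integrality conditions say
   that [g x_i - x_i] lies in [L] for every coset representative [x_i], and a
   map permuting the cosets of [L] fixes all of them once it fixes one
   representative of each.  For [phi_1^k] the permutation property is
   automatic: [I] is an ideal, so [L] is stable under [A], and [A^N = 1]
   because [1, xi, ..., xi^(phi(n)-1)] are linearly independent over Q (the
   cyclotomic polynomial is irreducible); hence [A^k] permutes the cosets with
   inverse [A^(N-k)]. *)

Section RootOfUnity.
Variable R : realType.

Lemma rootU_expr (m k : nat) :
  rootU R m ^+ k = cos (k%:R * (2 * pi / m%:R)) +i* sin (k%:R * (2 * pi / m%:R)).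
Proof.
elim: k => [|k IH]; first by rewrite expr0 !mul0r cos0 sin0.
rewrite exprSr IH /rootU; set t := (_ * pi / _).
rewrite -[k.+1]addn1 natrD mulrDl mul1r cosD sinD.
by rewrite {1}/GRing.mul /= [X in _ +i* X]addrC.
Qed.

Lemma cos_neq1 (x : R) : 0 < x < pi *+ 2 -> cos x != 1.
Proof.
case/andP=> x_gt0 x_lt2pi.
have cos_le_pi y : 0 < y <= pi -> cos y != 1.
  case/andP=> y_gt0 y_le_pi; rewrite -cos0 lt_eqF // ltr_cos //.
  - by rewrite in_itv /= lexx pi_ge0.
  - by rewrite in_itv /= (ltW y_gt0).
have [x_le_pi|pi_lt_x] := leP x pi; first by apply: cos_le_pi; rewrite x_gt0.
have -> : cos x = cos (pi *+ 2 - x) by rewrite cosB cos2pi sin2pi mul1r mul0r addr0.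
apply: cos_le_pi; rewrite subr_gt0 x_lt2pi /= lerBlDr -lerBlDl.
by rewrite mulr2n addrK ltW.
Qed.

Lemma rootU_unity {m : nat} : (0 < m)%N -> rootU R m ^+ m = 1.
Proof.
move=> m_gt0; rewrite rootU_expr mulrCA mulfV ?pnatr_eq0 -?lt0n // mulr1.
by rewrite mulr_natl cos2pi sin2pi.
Qed.

Lemma rootU_prim {m : nat} : (0 < m)%N -> m.-primitive_root (rootU R m).
Proof.
move=> m_gt0; have [d prim_d d_dvd_m] := prim_order_exists m_gt0 (rootU_unity m_gt0).
have [d_lt_m|] := ltnP d m; last first.
  move=> m_le_d; suff d_eq_m : d = m by rewrite -d_eq_m in prim_d *.
  by apply/anti_leq; rewrite m_le_d dvdn_leq.
have := prim_expr_order prim_d; rewrite rootU_expr => -[cos_eq1 _].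
exfalso; move: cos_eq1; apply/eqP/cos_neq1.
have m_gt0R : 0 < m%:R :> R by rewrite ltr0n.
rewrite mulr_gt0 ?ltr0n ?(prim_order_gt0 prim_d) ?divr_gt0 ?mulr_gt0 ?pi_gt0 //=.
rewrite mulrCA -[pi *+ 2]mulr_natl -[X in _ < X]mulr1 ltr_pM2l ?mulr_gt0 ?pi_gt0 //.
by rewrite ltr_pdivrMr // mul1r ltr_nat.
Qed.

End RootOfUnity.

Lemma root_Cyclotomic (F : fieldType) n (z : F) :
  n.-primitive_root z -> root (map_poly intr 'Phi_n) z.
Proof.
move=> prim_z; have n_gt0 := prim_order_gt0 prim_z.
have root_prod m : (0 < m)%N ->
    root (map_poly (intr : int -> F) (\prod_(d <- divisors m) 'Phi_d)) z = (z ^+ m == 1).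
  move=> m_gt0; rewrite prod_Cyclotomic // rmorphB rmorph1 rmorphXn /= map_polyX.
  by rewrite /root !hornerE subr_eq0.
have := root_prod n n_gt0; rewrite prim_expr_order // eqxx rmorph_prod.
rewrite -(big_map (fun d => map_poly (intr : int -> F) 'Phi_d) predT id) => root_all.
have : ~~ all (fun p => ~~ root p z) [seq map_poly (intr : int -> F) 'Phi_d | d <- divisors n].
  by rewrite -root_bigmul root_all.
case/allPn=> _ /mapP[d d_div -> /negPn root_d].
rewrite -dvdn_divisors // in d_div.
have [<- //|d_neq_n] := eqVneq d n.
have d_gt0 : (0 < d)%N := dvdn_gt0 n_gt0 d_div.
have : root (map_poly (intr : int -> F) (\prod_(e <- divisors d) 'Phi_e)) z.
  rewrite rmorph_prod (big_rem d) -?dvdn_divisors //.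
  by apply/rootP; rewrite hornerM (rootP root_d) mul0r.
rewrite root_prod // -(prim_order_dvd prim_z) => n_div_d.
by case/eqP: d_neq_n; apply/anti_leq; rewrite (dvdn_leq n_gt0 d_div) (dvdn_leq d_gt0 n_div_d).
Qed.

Lemma map_ratr_Cyclotomic (F : numFieldType) n :
  map_poly (ratr : rat -> F) (map_poly intr 'Phi_n) = map_poly intr 'Phi_n.
Proof. by rewrite -map_poly_comp; apply: eq_map_poly => b; rewrite /= rmorph_int. Qed.

Lemma size_Cyclotomic_rat n :
  size (map_poly intr 'Phi_n : {poly rat}) = (totient n).+1.
Proof. by rewrite size_map_inj_poly ?size_Cyclotomic //; exact: intr_inj. Qed.

Lemma Cyclotomic_rat_irreducible {n} :
  (0 < n)%N -> irreducible_poly (map_poly intr 'Phi_n : {poly rat}).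
Proof.
move=> n_gt0; set Phi := map_poly _ _.
split=> [|d size_d d_div]; first by rewrite size_Cyclotomic_rat ltnS totient_gt0.
have [z prim_z] := C_prim_root_exists n_gt0.
have : size (map_poly (ratr : rat -> algC) d) != 1%N by rewrite size_map_poly.
case/closed_rootP => w root_w.
have root_Phi_w : root (map_poly ratr Phi) w.
  have := dvdp_map (ratr : {rmorphism rat -> algC}) d Phi.
  by rewrite d_div => /dvdpP[q ->]; rewrite rootM root_w orbT.
have prim_w : n.-primitive_root w.
  by rewrite -(root_cyclotomic prim_z) -(Cintr_Cyclotomic prim_z) -map_ratr_Cyclotomic.
have [p [min_w_p _] min_w_dvd] := minCpolyP w.
have p_eq_Phi : p = Phi.
  apply: (map_inj_poly (fmorph_inj (ratr : {rmorphism rat -> algC})) (rmorph0 _)).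
  by rewrite -min_w_p map_ratr_Cyclotomic (minCpoly_cyclotomic prim_w) (Cintr_Cyclotomic prim_w).
by rewrite /eqp d_div -p_eq_Phi -min_w_dvd.
Qed.

Lemma poly_rat_prim_root_eq0 {F : numFieldType} {n} {z : F} {p : {poly rat}} :
  n.-primitive_root z -> (size p <= totient n)%N -> root (map_poly ratr p) z -> p = 0.
Proof.
move=> prim_z size_p root_p; apply/eqP; apply: contraLR size_p => p_neq0.
have n_gt0 := prim_order_gt0 prim_z.
set Phi := map_poly intr 'Phi_n : {poly rat}.
have root_Phi : root (map_poly ratr Phi) z.
  by rewrite map_ratr_Cyclotomic; apply: root_Cyclotomic.
have root_g : root (map_poly ratr (gcdp Phi p)) z.
  by rewrite gcdp_map root_gcd root_Phi.
have g_neq0 : gcdp Phi p != 0 by rewrite gcdp_eq0 negb_and p_neq0 orbT.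
have size_g : (1 < size (gcdp Phi p))%N.
  by rewrite -(size_map_poly (ratr : {rmorphism rat -> F})) (root_size_gt1 _ root_g) ?map_poly_eq0.
have /eqp_size size_g_eq : gcdp Phi p %= Phi.
  by apply: (Cyclotomic_rat_irreducible n_gt0).2; rewrite ?gtn_eqF ?dvdp_gcdl.
rewrite -ltnNge -size_Cyclotomic_rat -size_g_eq.
exact: dvdp_leq p_neq0 (dvdp_gcdr _ _).
Qed.

Section Embedding.
Context {R : realType} {n : nat}.

Lemma embB (u v : lat n) : emb R (u - v) = emb R u - emb R v.
Proof. by rewrite /emb -sumrB; apply: eq_bigr => j _; rewrite !mxE intrB mulrBl. Qed.

Lemma emb0 : emb R (0 : lat n) = 0.
Proof. by rewrite -(subrr (0 : lat n)) embB subrr. Qed.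

Definition coord_poly (v : lat n) : {poly rat} :=
  \sum_(j < totient n) (v j 0)%:~R *: 'X^j.

Lemma coef_coord_poly (v : lat n) (j : 'I_(totient n)) :
  (coord_poly v)`_j = (v j 0)%:~R.
Proof.
rewrite coef_sum (bigD1 j) //= coefZ coefXn eqxx mulr1 big1 ?addr0 // => k k_neq_j.
by rewrite coefZ coefXn eq_sym (inj_eq val_inj) (negbTE k_neq_j) mulr0.
Qed.

Lemma size_coord_poly (v : lat n) : (size (coord_poly v) <= totient n)%N.
Proof.
apply/leq_sizeP => j le_tj; rewrite coef_sum big1 // => k _.
by rewrite coefZ coefXn gtn_eqF ?mulr0 // (leq_trans (ltn_ord k)).
Qed.

Lemma emb_coord_poly (v : lat n) :
  emb R v = (map_poly ratr (coord_poly v)).[rootU R n].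
Proof.
rewrite rmorph_sum horner_sum; apply: eq_bigr => j _.
by rewrite /= map_polyZ map_polyXn hornerZ hornerXn rmorph_int.
Qed.

Lemma emb_inj : (0 < n)%N -> injective (emb R (n := n)).
Proof.
move=> n_gt0 u v /eqP; rewrite -subr_eq0 -embB emb_coord_poly => root_uv.
have uv0 := poly_rat_prim_root_eq0 (rootU_prim R n_gt0) (size_coord_poly _) root_uv.
apply/eqP; rewrite -subr_eq0; apply/eqP/matrixP => i j; rewrite (ord1 j) [RHS]mxE.
by have := coef_coord_poly (u - v) i; rewrite uv0 coef0 => /esym/eqP; rewrite intr_eq0 => /eqP.
Qed.

Lemma emb_mulmx_expr {G : latmx n} {c : R[i]} :
    (forall u, emb R (G *m u) = c * emb R u) ->
  forall k (v : lat n), emb R (G ^+ k *m v) = c ^+ k * emb R v.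
Proof.
move=> embG k v; elim: k => [|k IH]; first by rewrite !expr0 mul1mx mul1r.
by rewrite exprS -mulmxA embG IH exprS mulrA.
Qed.

Lemma mulmx_expr_unity {G : latmx n} {c : R[i]} m :
    (0 < n)%N -> (forall u, emb R (G *m u) = c * emb R u) -> c ^+ m = 1 ->
  forall v : lat n, G ^+ m *m v = v.
Proof.
move=> n_gt0 embG cm1 v; apply: (emb_inj n_gt0).
by rewrite (emb_mulmx_expr embG) cm1 mul1r.
Qed.

End Embedding.

Section CosetMaps.
Context {n : nat} {L : lat n -> Prop}.
Hypotheses (L0 : L 0) (LB : forall u v, L u -> L v -> L (u - v)).

Lemma congrL_trans {p q r} : L (p - q) -> L (q - r) -> L (p - r).
Proof.
move=> Lpq Lqr; have := LB _ _ Lpq (LB _ _ L0 Lqr).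
by rewrite sub0r opprK addrA subrK.
Qed.

Lemma congrL_sym {p q} : L (p - q) -> L (q - p).
Proof. by move=> Lpq; have := LB _ _ L0 Lpq; rewrite sub0r opprB. Qed.

Lemma maps_coset_image {g x y} : maps_coset L g x y -> L (g x - y).
Proof. by move=> gxy; apply/gxy; exists x; rewrite subrr. Qed.

Lemma maps_coset_eql {g x x' y} :
  L (x' - x) -> maps_coset L g x y -> maps_coset L g x' y.
Proof.
move=> Lxx' gxy w; rewrite gxy; split=> -[z [Lz gz]]; exists z; split=> //.
  exact: congrL_trans Lz (congrL_sym Lxx').
exact: congrL_trans Lz Lxx'.
Qed.

Lemma maps_coset_eqr {g x y y'} :
  L (y' - y) -> maps_coset L g x y -> maps_coset L g x y'.
Proof.
move=> Lyy' gxy w; rewrite -gxy; split=> Lw.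
  exact: congrL_trans Lw Lyy'.
exact: congrL_trans Lw (congrL_sym Lyy').
Qed.

Lemma fixes_cosets_of_reps ell (r : 'I_ell -> lat n) (g : lat n -> lat n) :
    (forall v, exists i, L (v - r i)) -> (forall x, exists y, maps_coset L g x y) ->
  (forall i, L (g (r i) - r i)) -> forall v, maps_coset L g v v.
Proof.
move=> reps g_perm g_fix v; have [i Lvi] := reps v; have [y gry] := g_perm (r i).
have Lry : L (r i - y).
  exact: congrL_trans (congrL_sym (g_fix i)) (maps_coset_image gry).
by apply: maps_coset_eqr (congrL_trans Lvi Lry) _; apply: maps_coset_eql gry.
Qed.

Lemma maps_coset_mulmx {G G' : latmx n} v :
    (forall u : lat n, L u -> L (G *m u)) -> (forall u : lat n, L u -> L (G' *m u)) ->
    (forall u : lat n, G *m (G' *m u) = u) -> (forall u : lat n, G' *m (G *m u) = u) ->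
  maps_coset L (fun u => G *m u) v (G *m v).
Proof.
move=> LG LG' GG' G'G w; split=> [Lw|[z [Lz <-]]]; last by rewrite -mulmxBr; apply: LG.
exists (G' *m w); split; last exact: GG'.
by rewrite -[v]G'G -mulmxBr; apply: LG'.
Qed.

Lemma inK_iff_reps (A B : latmx n) (g : lat n -> lat n) {ell} {r : 'I_ell -> lat n} :
    (forall v, exists i, L (v - r i)) ->
  inK A B L g <-> inH A B L g /\ forall i, L (g (r i) - r i).
Proof.
move=> reps; split=> [[gH g_fix]|[gH g_fix]]; split=> //.
  by move=> i; apply: maps_coset_image (g_fix (r i)).
exact: fixes_cosets_of_reps reps gH.2 g_fix.
Qed.

End CosetMaps.

Lemma ratmxM m p r (M : 'M[int]_(m, p)) (N : 'M[int]_(p, r)) :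
  ratmx (M *m N) = ratmx M *m ratmx N.
Proof. exact: map_mxM. Qed.

Lemma ratmxB m p (M N : 'M[int]_(m, p)) : ratmx (M - N) = ratmx M - ratmx N.
Proof. exact: map_mxB. Qed.

Lemma ratmx_inj m p : injective (@ratmx m p).
Proof.
move=> M N /matrixP eqMN; apply/matrixP => i j.
by have := eqMN i j; rewrite !mxE => /intr_inj.
Qed.

Section ColumnSpan.
Context {m : nat} {S : 'M[int]_m}.

(* A nonzero row [u] with [u S = 0] would separate the infinitely many vectors
   [t e_j], [u_j != 0], into pairwise distinct cosets. *)
Lemma col_span_unitmx {ell} (r : 'I_ell -> 'cV[int]_m) :
  (forall v, exists i w, v - r i = S *m w) -> ratmx S \in unitmx.
Proof.
move=> reps; apply: contraT; rewrite unitmxE unitfE negbK => /det0P[u u_neq0 uS].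
have u_kills_span v : (exists w, v = S *m w) -> u *m ratmx v = 0.
  by case=> w ->; rewrite ratmxM mulmxA uS mul0mx.
have /existsP[j uj_neq0] : [exists j, u 0 j != 0].
  apply: contraNT u_neq0 => /existsPn u0; apply/eqP/matrixP => i k.
  by rewrite (ord1 i) mxE; apply/eqP/negPn/u0.
pose e (t : nat) : 'cV[int]_m := \col_k (if k == j then t%:Z else 0).
have u_e t : (u *m ratmx (e t)) 0 0 = u 0 j * t%:R.
  rewrite !mxE (bigD1 j) //= big1 => [|k k_neq_j]; first by rewrite !mxE eqxx addr0.
  by rewrite !mxE (negbTE k_neq_j) mulr0.
have coset t : {i : 'I_ell | exists w, e t - r i = S *m w}.
  exact/boolp.cid/reps.
have coset_inj : injective (fun t : 'I_ell.+1 => sval (coset t)).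
  move=> t1 t2 /= same; case: (svalP (coset t1)) => w1; rewrite same.
  case: (svalP (coset t2)) => w2 e2 e1.
  have /(congr1 (fun M : 'M[rat]_(1, 1) => M 0 0)) :
      u *m ratmx (e t1) = u *m ratmx (e t2).
    apply/eqP; rewrite -subr_eq0 -mulmxBr -ratmxB; apply/eqP/u_kills_span.
    by exists (w1 - w2); rewrite mulmxBr -e1 -e2 opprB addrA subrK.
  by rewrite !u_e => /(mulfI uj_neq0)/eqP; rewrite eqr_nat => /eqP /val_inj.
by have := leq_card _ coset_inj; rewrite !card_ord ltnn.
Qed.

Lemma integral_invmx_col_span (y : 'cV[int]_m) : ratmx S \in unitmx ->
  integral_vec (invmx (ratmx S) *m ratmx y) <-> exists w, y = S *m w.
Proof.
move=> S_unit; split=> [int_q|[w ->]]; last first.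
  by rewrite ratmxM mulKmx // => i; rewrite mxE intr_int.
exists (map_mx (fun c : rat => Num.floor c) (invmx (ratmx S) *m ratmx y)).
apply: ratmx_inj; rewrite ratmxM (_ : ratmx (map_mx _ _) = invmx (ratmx S) *m ratmx y).
  by rewrite mulKVmx.
by apply/matrixP => i j; rewrite !mxE (ord1 j) floorK //; have := int_q i; rewrite mxE.
Qed.

End ColumnSpan.

Section PrincipalIdeal.
Context {R : realType} {n : nat}.
Variable a : lat n.

Lemma inL0 : inL R a 0.
Proof. by exists 0; rewrite emb0 mulr0. Qed.

Lemma inL_sub u v : inL R a u -> inL R a v -> inL R a (u - v).
Proof. by move=> [w1 e1] [w2 e2]; exists (w1 - w2); rewrite !embB e1 e2 mulrBr. Qed.

Lemma inL_mulmx (G : latmx n) (c : R[i]) (v : lat n) :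
  (forall u, emb R (G *m u) = c * emb R u) -> inL R a v -> inL R a (G *m v).
Proof. by move=> embG [w ew]; exists (G *m w); rewrite !embG ew mulrCA. Qed.

End PrincipalIdeal.

Theorem theorem3p2p2 (R : realType) (n : nat)
  (hn : n \in class_number_one_n)
  (a : lat n)
  (S : latmx n)
  (hS : forall v : lat n, inL R a v <-> exists w : lat n, v = S *m w)
  (A B : latmx n)
  (hA : forall v : lat n, emb R (A *m v) = rootU R (NN n) * emb R v)
  (hB : forall v : lat n, emb R (B *m v) = (emb R v)^*)
  (ell : nat) (x : 'I_ell -> lat n)
  (hcover : forall v : lat n, exists i, inL R a (v - x i))
  (hdistinct : forall i j, inL R a (x i - x j) -> i = j) :
  (inK A B (inL R a) (fun v => B *m v) <->
     inH A B (inL R a) (fun v => B *m v) /\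
     forall i, integral_vec (invmx (ratmx S) *m ratmx (B *m x i - x i)))
  /\
  (forall k : nat, (k %| NN n)%N ->
     (inK A B (inL R a) (fun v => A ^+ k *m v) <->
        forall i, integral_vec (invmx (ratmx S) *m ratmx (A ^+ k *m x i - x i)))).
Proof.
have n_gt0 : (0 < n)%N by move: hn; apply: contraTT; rewrite -eqn0Ngt => /eqP ->.
have S_unit : ratmx S \in unitmx.
  by apply: (col_span_unitmx x) => v; have [i /hS] := hcover v; exists i.
have intL y : integral_vec (invmx (ratmx S) *m ratmx y) <-> inL R a y.
  exact: iff_trans (integral_invmx_col_span y S_unit) (iff_sym (hS y)).
have inK_iff g := inK_iff_reps (inL0 a) (inL_sub a) A B g hcover.
split.
  rewrite inK_iff; split=> -[gH g_fix]; split=> // i; exact/intL/g_fix.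
move=> k k_dvd_N; have N_gt0 : (0 < NN n)%N by rewrite /NN; case: odd; rewrite ?muln_gt0.
have k_le_N := dvdn_leq N_gt0 k_dvd_N.
have LA j : forall v, inL R a v -> inL R a (A ^+ j *m v).
  by move=> v; apply: inL_mulmx; exact: emb_mulmx_expr hA j.
have AN := mulmx_expr_unity (NN n) n_gt0 hA (rootU_unity R N_gt0).
have mulmx_expA i j : A ^+ i *m A ^+ j = A ^+ (i + j) by rewrite exprD.
have AkAk' (v : lat n) : A ^+ k *m (A ^+ (NN n - k) *m v) = v.
  by rewrite mulmxA mulmx_expA subnKC.
have Ak'Ak (v : lat n) : A ^+ (NN n - k) *m (A ^+ k *m v) = v.
  by rewrite mulmxA mulmx_expA subnK.
have gH : inH A B (inL R a) (fun v => A ^+ k *m v).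
  split; first by exists k, 0%N, 0 => v; rewrite expr0 mul1mx addr0.
  move=> v; exists (A ^+ k *m v).
  exact: maps_coset_mulmx v (LA k) (LA _) AkAk' Ak'Ak.
rewrite inK_iff; split=> [[_ g_fix] i|g_fix]; first exact/intL/g_fix.
by split=> // i; apply/intL/g_fix.
Qed.
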